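(* Let $x_0\in\mathbb{R}$ and let $S:\mathbb{R}\to\mathbb{R}$ be a twice differentiable, decreasing function with $S''(\sigma)<0$ for all $\sigma$ (so $S$ is strictly concave downwards). Let $\{\Lambda_m\}_{m\in\mathbb{N}}$, $\{r_m\}_{m\in\mathbb{N}}$ and $I$ be as in the context. Let $(\mathcal{C}_{j,k})$ and $(\lambda_{j,k})$, indexed by $j\ge 0$, $k\in\mathbb{Z}$ with $|k-2^jx_0|<2^j$, be sequences of positive numbers such that: (i) for every $C\in\mathbb{R}$ and every choice of integers $k_j$ with $|k_j-2^jx_0|<2^j$, $$\limsup_{j\to+\infty}\left(\frac{\log_2(\mathcal{C}_{j,k_j})}{j}+C\,\frac{\log_2(\lambda_{j,k_j})}{j}\right)\le 0;$$ (ii) for every sequence of pairs $(j,k_j)\in I$ with $j\to+\infty$, $$\lim_{j\to+\infty}\frac{\log_2(\mathcal{C}_{j,k_j})}{j}=0\quad\text{and}\quad \lim_{j\to+\infty}\frac{\log_2(\lambda_{j,k_j})}{j}=0.$$ Let coefficients $c_{j,k}$ ($j\ge0$, $|k-2^jx_0|<2^j$) satisfy $$|c_{j,k}|\le \mathcal{C}_{j,k}\cdot\inf_{\sigma\in\mathbb{R}}\left\{2^{-jS(\sigma)}\left(\frac{1+|k-2^jx_0|}{\lambda_{j,k}}\right)^{S(\sigma)-\sigma}\right\},$$ with equality whenever $(j,k)\in I$. Let $\psi$ be a wavelet in the Schwartz class with all moments vanishing. Then the function (or distribution) defined near $x_0$ by $$f(x)=\sum_{j\ge0}\ \sum_{k\in\mathbb{Z},\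 |k-2^jx_0|<2^j} c_{j,k}\,\psi(2^jx-k)$$ has $S$ as its 2-microlocal frontier at $x_0$, i.e. $\sup\{s: f\in C^{s,\sigma-s}_{x_0}\}=S(\sigma)$ for every $\sigma\in\mathbb{R}$.
   Context: A wavelet is a function $\psi\in L^2(\mathbb{R})$ such that $\{2^{j/2}\psi(2^jx-k)\}_{j,k\in\mathbb{Z}}$ is an orthonormal basis of $L^2(\mathbb{R})$; the wavelet coefficients of $f$ are $c_{j,k}=2^{j/2}\langle f,\psi_{j,k}\rangle$ with $\psi_{j,k}(x)=2^{j/2}\psi(2^jx-k)$, so that $f=\sum c_{j,k}\psi(2^jx-k)$. For $s,s'\in\mathbb{R}$, the (local) 2-microlocal space $C^{s,s'}_{x_0}$ is defined as: $f\in C^{s,s'}_{x_0}$ iff there is $C>0$ with $|c_{j,k}|\le C\,2^{-js}(1+|k-2^jx_0|)^{-s'}$ for all $j\ge0$ and $k\in\mathbb{Z}$ with $|k/2^j-x_0|<1$ (the wavelet $\psi$ being Schwartz with all vanishing moments). The 2-microlocal frontier of $f$ at $x_0$ is the function $\sigma\mapsto\sup\{s: f\in C^{s,\sigma-s}_{x_0}\}$. Write $\mathbb{N}$ as a disjoint union $\mathbb{N}=\bigsqcup_{m\in\mathbb{N}}\Lambda_m$ of infinite sets $\Lambda_m$ (e.g. $\Lambda_m$ = natural numbers whose binary expansion has exactly $m$ ones). Let $\{r_m\}_{m\in\mathbb{N}}$ be a dense subset of $\mathrm{Im}\left(\frac{S'(\sigma)}{S'(\sigma)-1}\right)\subseteq[0,1]$.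 Define $$I=\{(j,k_j): j\in\Lambda_m \text{ for some } m,\ \text{and } [\,|k_j-2^jx_0|\,]=[2^{jr_m}]\},$$ where $[x]$ denotes the integer part of $x$. *)

From Stdlib Require Import Reals Lra ZArith.
Open Scope R_scope.

Definition log2 (x : R) : R := ln x / ln 2.

Definition in_dom (x0 : R) (j : nat) (k : Z) : Prop :=
  Rabs (IZR k - 2 ^ j * x0) < 2 ^ j.

(* Local 2-microlocal space C^{s,s'}_{x0}, stated on the wavelet coefficients
   c_{j,k} (j >= 0, |k/2^j - x0| < 1) as in the context. *)
Definition in_C2ml (c : nat -> Z -> R) (x0 s s' : R) : Prop :=
  exists K : R, 0 < K /\
    forall (j : nat) (k : Z), in_dom x0 j k ->
      Rabs (c j k) <= K * Rpower 2 (- (INR j * s))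
                        * Rpower (1 + Rabs (IZR k - 2 ^ j * x0)) (- s').

Definition frontier_is (c : nat -> Z -> R) (x0 : R) (S : R -> R) : Prop :=
  forall sigma : R, is_lub (fun s => in_C2ml c x0 s (sigma - s)) (S sigma).

Definition is_infimum (F : R -> R) (l : R) : Prop :=
  (forall sigma, l <= F sigma) /\
  (forall l', (forall sigma, l' <= F sigma) -> l' <= l).

(* mof j = m  iff  j \in Lambda_m : a partition of N into infinite sets *)
Definition infinite_partition (mof : nat -> nat) : Prop :=
  forall m N : nat, exists j : nat, (N <= j)%nat /\ mof j = m.

Definition in_I (mof : nat -> nat) (r : nat -> R) (x0 : R) (j : nat) (k : Z) : Prop :=
  Int_part (Rabs (IZR k - 2 ^ j * x0)) = Int_part (Rpower 2 (INR j * r (mof j))).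

Definition bound_fun (S : R -> R) (x0 : R) (j : nat) (k : Z) (lam : R) (sigma : R) : R :=
  Rpower 2 (- (INR j * S sigma))
  * Rpower ((1 + Rabs (IZR k - 2 ^ j * x0)) / lam) (S sigma - sigma).

(* At dyadic scale [u = log2 ((1 + |k - 2^j x0|) / lam_{j,k}) / j] the prescribed bound on
   [c_{j,k}] is [C_{j,k} 2^(j L(u))], where [L(u) = inf_sigma (- S sigma + (S sigma - sigma) u)]
   is an infimum of affine functions of [u], hence concave and continuous.
   If [s < S sigma], comparing with the term [sigma' > sigma] close to [sigma] shows that [c]
   lies in [C^{s, sigma - s}]: hypothesis (i), made uniform in [k] by choosing a worst [k] at
   each level, absorbs [C] and [lam], and the remaining levels are finitely many coefficients.
   Conversely, by concavity of [S] the infimum [L(u)] at [u = rho = S'(sigma) / (S'(sigma) - 1)]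
   is attained at [sigma]. On the points of [I] at the levels [j] of a [Lambda_m] with [r_m]
   close to [rho], the bound is an equality and (ii) makes [C] and [lam] negligible, so a
   [C^{s, sigma - s}] estimate forces [L(r_m) <= - s + (s - sigma) r_m] in the limit
   [j -> +oo]; continuity of [L] at [rho] then gives [s <= S sigma]. *)

From Stdlib Require Import Reals Lra Lia ZArith Classical IndefiniteDescription.
Open Scope R_scope.

Lemma derive_nonpos_of_decreasing (f f' : R -> R) :
  (forall x, derivable_pt_lim f x (f' x)) -> decreasing f -> forall x, f' x <= 0.
Proof.
  intros Hf Hdec x.
  exact (nonpos_derivative_0 f (fun x => exist (derivable_pt_abs f x) (f' x) (Hf x)) Hdec x).
Qed.

Lemma strict_decreasing_of_derive_neg (f f' : R -> R) :
  (forall x, derivable_pt_lim f x (f' x)) -> (forall x, f' x < 0) -> strict_decreasing f.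
Proof.
  intros Hf Hneg.
  exact (negative_derivative f (fun x => exist (derivable_pt_abs f x) (f' x) (Hf x)) Hneg).
Qed.

Lemma tangent_above_of_derive_decreasing (f f' : R -> R) :
  (forall x, derivable_pt_lim f x (f' x)) -> decreasing f' ->
  forall x y, f y <= f x + f' x * (y - x).
Proof.
  intros Hf Hdec x y.
  set (pr := fun x => exist (derivable_pt_abs f x) (f' x) (Hf x)).
  destruct (Rtotal_order x y) as [Hxy | [-> | Hyx]].
  - destruct (MVT_cor1 f x y pr Hxy) as [z [Hz [Hxz _]]]; simpl in Hz.
    assert (f' z <= f' x) by (apply Hdec; lra).
    nra.
  - lra.
  - destruct (MVT_cor1 f y x pr Hyx) as [z [Hz [_ Hzx]]]; simpl in Hz.
    assert (f' x <= f' z) by (apply Hdec; lra).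
    nra.
Qed.

Lemma continuity_right_above (f : R -> R) x a :
  continuity_pt f x -> a < f x -> exists y, x < y /\ a < f y.
Proof.
  intros Hc Ha.
  destruct (Hc (f x - a)) as [d [Hd Hnear]]; [lra |].
  exists (x + d / 2); split; [lra |].
  assert (Hdist : Rabs (f (x + d / 2) - f x) < f x - a).
  { apply (Hnear (x + d / 2)); split.
    - split; [exact I | lra].
    - simpl; unfold Rdist; rewrite Rabs_right; lra. }
  apply Rabs_def2 in Hdist; lra.
Qed.

Lemma affine_above_chord (a b p q t gp gq : R) :
  0 <= t <= 1 -> gp <= a + b * p -> gq <= a + b * q ->
  gp - t * Rabs (gq - gp) <= a + b * (p + t * (q - p)).
Proof.
  intros Ht Hp Hq.
  assert ((1 - t) * gp <= (1 - t) * (a + b * p)) by (apply Rmult_le_compat_l; lra).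
  assert (t * gq <= t * (a + b * q)) by (apply Rmult_le_compat_l; lra).
  assert (Habs : - Rabs (gq - gp) <= gq - gp).
  { pose proof (Rle_abs (- (gq - gp))) as Hle; rewrite Rabs_Ropp in Hle; lra. }
  assert (t * - Rabs (gq - gp) <= t * (gq - gp)) by (apply Rmult_le_compat_l; lra).
  nra.
Qed.

Lemma affine_family_lower_right {I : Type} (A B : I -> R) (p q g gq eps : R) :
  p < q -> 0 < eps ->
  (forall i, g <= A i + B i * p) -> (forall i, gq <= A i + B i * q) ->
  exists delta, 0 < delta /\
    forall u, p <= u < p + delta -> forall i, g - eps <= A i + B i * u.
Proof.
  intros Hpq Heps Hp Hq.
  assert (HM : 0 < Rabs (gq - g) + 1) by (pose proof (Rabs_pos (gq - g)); lra).
  set (t0 := Rmin 1 (eps / (Rabs (gq - g) + 1))).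
  assert (Ht0 : 0 < t0) by (apply Rmin_glb_lt; [lra | apply Rdiv_lt_0_compat; lra]).
  assert (Ht0e : t0 * Rabs (gq - g) <= eps).
  { apply (Rle_trans _ (eps / (Rabs (gq - g) + 1) * (Rabs (gq - g) + 1))).
    - apply Rmult_le_compat; [lra | apply Rabs_pos | apply Rmin_r | lra].
    - right; field; lra. }
  exists ((q - p) * t0). split; [apply Rmult_lt_0_compat; lra |].
  intros u Hu i.
  set (t := (u - p) / (q - p)).
  assert (Ht : 0 <= t <= t0).
  { unfold t, Rdiv. split.
    - apply Rmult_le_pos; [lra | left; apply Rinv_0_lt_compat; lra].
    - apply (Rmult_le_reg_r (q - p)); [lra |].
      rewrite Rmult_assoc, Rinv_l, Rmult_1_r; lra. }
  replace u with (p + t * (q - p)) by (unfold t; field; lra).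
  assert (t * Rabs (gq - g) <= eps).
  { apply (Rle_trans _ (t0 * Rabs (gq - g))); [| exact Ht0e].
    apply Rmult_le_compat_r; [apply Rabs_pos | lra]. }
  assert (Ht1 : t <= 1) by (apply (Rle_trans _ t0); [lra | apply Rmin_l]).
  pose proof (affine_above_chord (A i) (B i) p q t g gq ltac:(lra) (Hp i) (Hq i)).
  lra.
Qed.

Lemma affine_family_lower_near {I : Type} (A B : I -> R) (q1 p q2 g1 g g2 eps : R) :
  q1 < p < q2 -> 0 < eps ->
  (forall i, g1 <= A i + B i * q1) -> (forall i, g <= A i + B i * p) ->
  (forall i, g2 <= A i + B i * q2) ->
  exists delta, 0 < delta /\
    forall u, Rabs (u - p) < delta -> forall i, g - eps <= A i + B i * u.
Proof.
  intros Hq Heps H1 Hp H2.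
  destruct (affine_family_lower_right A B p q2 g g2 eps) as [dr [Hdr Hright]]; try tauto.
  destruct (affine_family_lower_right A (fun i => - B i) (- p) (- q1) g g1 eps) as [dl [Hdl Hleft]];
    try (intros i; rewrite Rmult_opp_opp; auto); [lra | exact Heps |].
  exists (Rmin dl dr). split; [apply Rmin_glb_lt; assumption |].
  intros u Hu i. apply Rabs_def2 in Hu.
  assert (Hmin := Rmin_l dl dr). assert (Hmin' := Rmin_r dl dr).
  destruct (Rle_or_lt p u) as [Hpu | Hup].
  - apply Hright. lra.
  - replace (A i + B i * u) with (A i + - B i * - u) by ring. apply Hleft. lra.
Qed.

Definition tangency_point (S1 : R -> R) (sigma : R) : R := S1 sigma / (S1 sigma - 1).

(* [bound_fun S x0 j k lam sigma = 2 ^ (j * bound_exponent S sigma u)] for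
   [u = log2 ((1 + |k - 2^j x0|) / lam) / j]. *)
Definition bound_exponent (S : R -> R) (sigma u : R) : R := - S sigma + (S sigma - sigma) * u.

Section ConcaveProfile.
Variables (S S1 S2 : R -> R).
Hypotheses (HS1 : forall x, derivable_pt_lim S x (S1 x))
  (HS2 : forall x, derivable_pt_lim S1 x (S2 x))
  (Hdecr : decreasing S) (Hconc : forall x, S2 x < 0).

Let S1_nonpos : forall x, S1 x <= 0 := derive_nonpos_of_decreasing S S1 HS1 Hdecr.
Let S1_decr : strict_decreasing S1 := strict_decreasing_of_derive_neg S1 S2 HS2 Hconc.

Let S1_decreasing : decreasing S1.
Proof.
  intros a b Hab. destruct (Rle_lt_or_eq_dec a b Hab) as [Hlt | ->].
  - left; apply S1_decr, Hlt.
  - lra.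
Qed.

Lemma tangency_pointE x : tangency_point S1 x = 1 - / (1 - S1 x).
Proof. pose proof (S1_nonpos x). unfold tangency_point. field. split; lra. Qed.

Lemma tangency_point_bounds x : 0 <= tangency_point S1 x < 1.
Proof.
  pose proof (S1_nonpos x). rewrite tangency_pointE.
  assert (0 < / (1 - S1 x)) by (apply Rinv_0_lt_compat; lra).
  assert (/ (1 - S1 x) <= 1) by (rewrite <- Rinv_1; apply Rinv_le_contravar; lra).
  lra.
Qed.

Lemma tangency_point_increasing x y : x < y -> tangency_point S1 x < tangency_point S1 y.
Proof.
  intros Hxy. rewrite !tangency_pointE.
  pose proof (S1_decr x y Hxy). pose proof (S1_nonpos x).
  assert (/ (1 - S1 y) < / (1 - S1 x)) by (apply Rinv_lt_contravar; nra).
  lra.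
Qed.

Lemma bound_exponent_min_at_tangency x y :
  bound_exponent S x (tangency_point S1 x) <= bound_exponent S y (tangency_point S1 x).
Proof.
  pose proof (S1_nonpos x).
  pose proof (tangent_above_of_derive_decreasing S S1 HS1 S1_decreasing x y).
  assert (Hdiff : bound_exponent S y (tangency_point S1 x)
                  - bound_exponent S x (tangency_point S1 x)
                  = (S x + S1 x * (y - x) - S y) / (1 - S1 x)).
  { unfold bound_exponent, tangency_point. field. split; lra. }
  assert (0 <= (S x + S1 x * (y - x) - S y) / (1 - S1 x)).
  { unfold Rdiv. apply Rmult_le_pos; [lra | left; apply Rinv_0_lt_compat; lra]. }
  lra.
Qed.

Lemma bound_exponent_lower_near_tangency x eps : 0 < eps ->
  exists delta, 0 < delta /\ forall u, Rabs (u - tangency_point S1 x) < delta ->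
    forall y, bound_exponent S x (tangency_point S1 x) - eps <= bound_exponent S y u.
Proof.
  intros Heps.
  apply (affine_family_lower_near (fun y => - S y) (fun y => S y - y)
           (tangency_point S1 (x - 1)) (tangency_point S1 x) (tangency_point S1 (x + 1))
           (bound_exponent S (x - 1) (tangency_point S1 (x - 1)))
           (bound_exponent S x (tangency_point S1 x))
           (bound_exponent S (x + 1) (tangency_point S1 (x + 1))) eps);
    try (intros y; apply bound_exponent_min_at_tangency); auto.
  split; apply tangency_point_increasing; lra.
Qed.

End ConcaveProfile.

Lemma eventually_uniform (D : nat -> Z -> Prop) (Q : nat -> Z -> R) (eps : R) :
  (forall j, exists k, D j k) ->
  (forall kj : nat -> Z, (forall j, D j (kj j)) ->
     exists N, forall j, (N <= j)%nat -> Q j (kj j) <= eps) ->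
  exists N, forall j k, (N <= j)%nat -> D j k -> Q j k <= eps.
Proof.
  intros Hne Hseq.
  (* choose at each level [j] a violating index whenever there is one *)
  assert (Hworst : forall j, exists k,
             D j k /\ ((exists k', D j k' /\ eps < Q j k') -> eps < Q j k)).
  { intros j. destruct (classic (exists k', D j k' /\ eps < Q j k')) as [[k' Hk'] | Hnone].
    - exists k'. tauto.
    - destruct (Hne j) as [k Hk]. exists k. tauto. }
  destruct (functional_choice _ Hworst) as [kj Hkj].
  destruct (Hseq kj (fun j => proj1 (Hkj j))) as [N HN].
  exists N. intros j k Hj Hk.
  destruct (Rle_or_lt (Q j k) eps) as [Hle | Hgt]; [exact Hle |].
  assert (eps < Q j (kj j)) by (apply (proj2 (Hkj j)); eauto).
  specialize (HN j Hj). lra.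
Qed.

Lemma increasing_subsequence (P : nat -> Prop) :
  (forall N, exists j, (N <= j)%nat /\ P j) ->
  exists phi : nat -> nat, (forall n, (phi n < phi (S n))%nat) /\ (forall n, P (phi n)).
Proof.
  intros Hinf.
  destruct (functional_choice _ Hinf) as [g Hg].
  exists (fix phi n := match n with O => g O | S n => g (S (phi n)) end).
  split; intros n.
  - apply (Hg (S _)).
  - destruct n; apply Hg.
Qed.

Lemma strict_increasing_ge_id (phi : nat -> nat) :
  (forall n, (phi n < phi (S n))%nat) -> forall n, (n <= phi n)%nat.
Proof. intros Hphi n. induction n as [| n IH]; [lia | specialize (Hphi n); lia]. Qed.

Lemma Z_window_bounded (F : Z -> R) (B : nat) :
  exists M, forall k, (Z.abs k <= Z.of_nat B)%Z -> F k <= M.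
Proof.
  induction B as [| B [M HM]].
  - exists (F 0%Z). intros k Hk. replace k with 0%Z by lia. lra.
  - exists (Rmax M (Rmax (F (Z.of_nat (S B))) (F (- Z.of_nat (S B))%Z))).
    intros k Hk.
    destruct (Z.le_gt_cases (Z.abs k) (Z.of_nat B)) as [Hin | Hout].
    + apply (Rle_trans _ M); [auto | apply Rmax_l].
    + eapply Rle_trans; [| apply Rmax_r].
      destruct (Z.abs_spec k) as [[_ Habs] | [_ Habs]].
      * replace k with (Z.of_nat (S B)) by lia. apply Rmax_l.
      * replace k with (- Z.of_nat (S B))%Z by lia. apply Rmax_r.
Qed.

Lemma window_bounded (F : nat -> Z -> R) (N B : nat) :
  exists M, forall j k, (j < N)%nat -> (Z.abs k <= Z.of_nat B)%Z -> F j k <= M.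
Proof.
  induction N as [| N [M HM]].
  - exists 0. intros j k Hj. lia.
  - destruct (Z_window_bounded (F N) B) as [M' HM'].
    exists (Rmax M M'). intros j k Hj Hk.
    destruct (Nat.eq_dec j N) as [-> | Hne].
    + apply (Rle_trans _ M'); [auto | apply Rmax_r].
    + apply (Rle_trans _ M); [apply HM; auto; lia | apply Rmax_l].
Qed.

Lemma Un_cv_const (l : R) : Un_cv (fun _ => l) l.
Proof.
  intros eps Heps. exists O. intros n _. unfold Rdist.
  rewrite Rminus_diag, Rabs_R0. lra.
Qed.

Lemma Un_cv_of_dist_le (u v : nat -> R) (l : R) :
  (forall n, Rabs (u n - l) <= v n) -> Un_cv v 0 -> Un_cv u l.
Proof.
  intros Hle Hv eps Heps. destruct (Hv eps Heps) as [N HN].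
  exists N. intros n Hn. specialize (HN n Hn). specialize (Hle n).
  unfold Rdist in *. rewrite Rminus_0_r in HN.
  pose proof (Rle_abs (v n)). lra.
Qed.

Lemma Un_cv_le_eventually (u v : nat -> R) (lu lv : R) (N : nat) :
  (forall n, (N <= n)%nat -> u n <= v n) -> Un_cv u lu -> Un_cv v lv -> lu <= lv.
Proof.
  intros Hle Hu Hv.
  apply (Rle_cv_lim (Un := fun n => u (n + N)%nat) (Vn := fun n => v (n + N)%nat)).
  - intros n. apply Hle. lia.
  - apply CV_shift', Hu.
  - apply CV_shift', Hv.
Qed.

Lemma ln2_pos : 0 < ln 2.
Proof. rewrite <- ln_1. apply ln_increasing; lra. Qed.

Lemma one_plus_Rabs_pos x : 0 < 1 + Rabs x.
Proof. pose proof (Rabs_pos x). lra. Qed.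

Lemma log2_Rpower2 y : log2 (Rpower 2 y) = y.
Proof. unfold log2. rewrite ln_Rpower. field. apply Rgt_not_eq, ln2_pos. Qed.

Lemma Rpower2_log2 x : 0 < x -> Rpower 2 (log2 x) = x.
Proof.
  intros Hx. unfold Rpower, log2.
  replace (ln x / ln 2 * ln 2) with (ln x) by (field; apply Rgt_not_eq, ln2_pos).
  apply exp_ln, Hx.
Qed.

Lemma log2_mult x y : 0 < x -> 0 < y -> log2 (x * y) = log2 x + log2 y.
Proof.
  intros Hx Hy. unfold log2. rewrite ln_mult by assumption.
  field. apply Rgt_not_eq, ln2_pos.
Qed.

Lemma log2_inv x : 0 < x -> log2 (/ x) = - log2 x.
Proof. intros Hx. unfold log2. rewrite ln_Rinv by assumption. field. apply Rgt_not_eq, ln2_pos. Qed.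

Lemma log2_lt x y : 0 < x -> x < y -> log2 x < log2 y.
Proof.
  intros Hx Hxy. unfold log2, Rdiv.
  apply Rmult_lt_compat_r; [apply Rinv_0_lt_compat, ln2_pos | apply ln_increasing; auto].
Qed.

Lemma log2_pos x : 1 < x -> 0 < log2 x.
Proof.
  intros Hx. unfold log2. apply Rdiv_lt_0_compat; [| apply ln2_pos].
  rewrite <- ln_1. apply ln_increasing; lra.
Qed.

Lemma Rpower2_le_inv y z : Rpower 2 y <= Rpower 2 z -> y <= z.
Proof.
  intros Hyz. destruct (Rle_or_lt y z) as [Hle | Hlt]; [exact Hle |].
  pose proof (Rpower_lt 2 z y ltac:(lra) Hlt). lra.
Qed.

Lemma Rpower_as_Rpower2 x y : 0 < x -> Rpower x y = Rpower 2 (y * log2 x).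
Proof.
  intros Hx. unfold Rpower, log2. f_equal.
  field. apply Rgt_not_eq, ln2_pos.
Qed.

Lemma dyadic_point_at_distance x0 j t : 0 <= t < 2 ^ j ->
  exists k, in_dom x0 j k /\ Int_part (Rabs (IZR k - 2 ^ j * x0)) = Int_part t.
Proof.
  intros Ht.
  set (n := Int_part t). destruct (base_Int_part t) as [Hn1 Hn2]. fold n in Hn1, Hn2.
  (* [2 ^ j] is an integer, so [n < 2 ^ j] gives [n + 1 <= 2 ^ j] *)
  assert (Hn : IZR n + 1 <= 2 ^ j).
  { rewrite <- plus_IZR, (pow_IZR 2). apply IZR_le.
    assert (Hlt : IZR n < IZR (2 ^ Z.of_nat j)) by (rewrite <- pow_IZR; lra).
    apply lt_IZR in Hlt. lia. }
  assert (Hn0 : 0 <= IZR n) by (apply IZR_le; assert (-1 < n)%Z by (apply lt_IZR; lra); lia).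
  set (y := 2 ^ j * x0 + IZR n).
  destruct (base_Int_part (- y)) as [Hy1 Hy2].
  exists (- Int_part (- y))%Z. rewrite opp_IZR.
  assert (Hdist : IZR n <= - IZR (Int_part (- y)) - 2 ^ j * x0 < IZR n + 1) by (unfold y in *; lra).
  rewrite Rabs_right by lra. split.
  - unfold in_dom. rewrite opp_IZR, Rabs_right; lra.
  - symmetry. apply Int_part_spec. lra.
Qed.

Lemma in_dom_nonempty x0 j : exists k, in_dom x0 j k.
Proof.
  destruct (dyadic_point_at_distance x0 j 0) as [k [Hk _]].
  - split; [lra | apply pow_lt; lra].
  - exists k. exact Hk.
Qed.

Lemma log2_one_plus_dist_bounds x0 j k : in_dom x0 j k ->
  0 <= log2 (1 + Rabs (IZR k - 2 ^ j * x0)) < INR j + 1.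
Proof.
  unfold in_dom. set (d := Rabs (IZR k - 2 ^ j * x0)). intros Hd.
  assert (Hd0 : 0 <= d) by apply Rabs_pos.
  split.
  - destruct Hd0 as [Hd0 | Hd0].
    + left. apply log2_pos. lra.
    + rewrite <- Hd0, Rplus_0_r. unfold log2. rewrite ln_1. lra.
  - rewrite <- (log2_Rpower2 (INR j + 1)). apply log2_lt; [lra |].
    rewrite <- S_INR, Rpower_pow by lra. simpl.
    pose proof (pow_R1_Rle 2 j ltac:(lra)). lra.
Qed.

Lemma log2_near_of_same_Int_part d y : 0 <= y -> Int_part d = Int_part (Rpower 2 y) ->
  y < log2 (1 + d) < y + log2 3.
Proof.
  intros Hy Hint. set (t := Rpower 2 y) in Hint.
  assert (Ht : 1 <= t) by (unfold t; rewrite <- (Rpower_O 2) by lra; apply Rle_Rpower; lra).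
  destruct (base_Int_part d) as [Hd1 Hd2]. destruct (base_Int_part t) as [Ht1 Ht2].
  rewrite Hint in Hd1, Hd2.
  rewrite <- (log2_Rpower2 y), <- log2_mult by (try unfold Rpower; try apply exp_pos; lra).
  fold t. split; apply log2_lt; unfold t in *; try apply exp_pos; lra.
Qed.

Lemma in_dom_window x0 N :
  exists B : nat, forall j k, (j < N)%nat -> in_dom x0 j k -> (Z.abs k <= Z.of_nat B)%Z.
Proof.
  set (b := 2 ^ N * (Rabs x0 + 1)).
  exists (Z.to_nat (up b)). intros j k Hj Hk. unfold in_dom in Hk.
  destruct (archimed b) as [Hb _].
  assert (H2j : 2 ^ j <= 2 ^ N) by (apply Rle_pow; lia || lra).
  assert (Hx0 : 0 <= Rabs x0) by apply Rabs_pos.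
  assert (Hk' : Rabs (IZR k) < b).
  { replace (IZR k) with ((IZR k - 2 ^ j * x0) + 2 ^ j * x0) by ring.
    eapply Rle_lt_trans; [apply Rabs_triang |].
    rewrite Rabs_mult, (Rabs_right (2 ^ j)) by (apply Rle_ge, pow_le; lra).
    unfold b. pose proof (pow_lt 2 j ltac:(lra)). nra. }
  rewrite <- abs_IZR in Hk'.
  assert (Hlt : (Z.abs k < up b)%Z) by (apply lt_IZR; lra).
  lia.
Qed.

Lemma in_dom_prefix_bounded x0 (F : nat -> Z -> R) N :
  exists M, forall j k, (j < N)%nat -> in_dom x0 j k -> F j k <= M.
Proof.
  destruct (in_dom_window x0 N) as [B HB].
  destruct (window_bounded F N B) as [M HM].
  exists M. intros j k Hj Hk. apply HM; [exact Hj | exact (HB j k Hj Hk)].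
Qed.

Lemma bound_fun_Rpower2 S x0 j k lam sigma : 0 < lam ->
  bound_fun S x0 j k lam sigma =
  Rpower 2 (- (INR j * S sigma)
            + (S sigma - sigma) * (log2 (1 + Rabs (IZR k - 2 ^ j * x0)) - log2 lam)).
Proof.
  intros Hlam. unfold bound_fun.
  assert (Hd := one_plus_Rabs_pos (IZR k - 2 ^ j * x0)).
  rewrite (Rpower_as_Rpower2 (_ / lam)) by (apply Rdiv_lt_0_compat; auto).
  rewrite <- Rpower_plus. unfold Rdiv.
  rewrite log2_mult, log2_inv by (try apply Rinv_0_lt_compat; auto).
  f_equal; ring.
Qed.

Lemma lower_exponent_arith A a delta P L :
  0 < a -> 0 < delta -> A <= Rmin a delta * P -> 0 <= L <= P + 1 ->
  A - a * P + (a - delta) * L <= a.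
Proof.
  intros Ha Hd HA HL. destruct (Rle_or_lt delta a) as [Hda | Had].
  - rewrite Rmin_right in HA by lra.
    assert ((a - delta) * L <= (a - delta) * (P + 1)) by (apply Rmult_le_compat_l; lra).
    lra.
  - rewrite Rmin_left in HA by lra.
    assert ((a - delta) * L <= 0) by nra.
    lra.
Qed.

Section LowerBound.
Variables (x0 : R) (S S1 : R -> R) (Cc lam c : nat -> Z -> R).
Hypotheses (HS1 : forall x, derivable_pt_lim S x (S1 x))
  (HCpos : forall j k, in_dom x0 j k -> 0 < Cc j k)
  (Hlampos : forall j k, in_dom x0 j k -> 0 < lam j k)
  (Hi : forall (C : R) (kj : nat -> Z), (forall j, in_dom x0 j (kj j)) ->
      forall eps, 0 < eps -> exists N : nat, forall j : nat, (N <= j)%nat ->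
        log2 (Cc j (kj j)) / INR j + C * (log2 (lam j (kj j)) / INR j) <= eps)
  (Hc : forall j k, in_dom x0 j k ->
      exists l, is_infimum (bound_fun S x0 j k (lam j k)) l /\
        Rabs (c j k) <= Cc j k * l).

Lemma coefficient_tail_bound j k sigma s sigma' :
  (1 <= j)%nat -> in_dom x0 j k -> sigma < sigma' -> s < S sigma' ->
  log2 (Cc j k) / INR j + (sigma' - S sigma') * (log2 (lam j k) / INR j)
    <= Rmin (S sigma' - s) (sigma' - sigma) ->
  Rabs (c j k) <= Rpower 2 (S sigma' - s)
                  * (Rpower 2 (- (INR j * s))
                     * Rpower (1 + Rabs (IZR k - 2 ^ j * x0)) (- (sigma - s))).
Proof.
  intros Hj Hk Hsig Hs HQ.
  assert (HCk := HCpos j k Hk). assert (Hlk := Hlampos j k Hk).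
  destruct (Hc j k Hk) as [l [[Hinf _] Hcl]].
  apply (Rle_trans _ _ _ Hcl).
  apply (Rle_trans _ (Cc j k * bound_fun S x0 j k (lam j k) sigma')).
  { apply Rmult_le_compat_l; [lra | apply Hinf]. }
  destruct (log2_one_plus_dist_bounds x0 j k Hk) as [HL0 HL1].
  rewrite bound_fun_Rpower2 by exact Hlk.
  rewrite <- (Rpower2_log2 (Cc j k)) at 1 by exact HCk.
  rewrite (Rpower_as_Rpower2 (1 + _)) by apply one_plus_Rabs_pos.
  rewrite <- !Rpower_plus. apply Rle_Rpower; [lra |].
  set (J := INR j) in *. set (L := log2 (1 + Rabs (IZR k - 2 ^ j * x0))) in *.
  assert (HJ : 0 < J) by (apply lt_0_INR; lia).
  assert (HA : log2 (Cc j k) + (sigma' - S sigma') * log2 (lam j k)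
               <= Rmin (S sigma' - s) (sigma' - sigma) * J).
  { replace (log2 (Cc j k) + (sigma' - S sigma') * log2 (lam j k))
      with ((log2 (Cc j k) / J + (sigma' - S sigma') * (log2 (lam j k) / J)) * J) by (field; lra).
    apply Rmult_le_compat_r; lra. }
  pose proof (lower_exponent_arith _ (S sigma' - s) (sigma' - sigma) J L
                ltac:(lra) ltac:(lra) HA ltac:(lra)).
  lra.
Qed.

Lemma frontier_lower sigma s : s < S sigma -> in_C2ml c x0 s (sigma - s).
Proof.
  intros Hs.
  destruct (continuity_right_above S sigma s
              (derivable_continuous_pt S sigma (exist _ (S1 sigma) (HS1 sigma))) Hs)
    as [sigma' [Hsig Hs']].
  set (e := Rmin (S sigma' - s) (sigma' - sigma)).
  assert (He : 0 < e) by (apply Rmin_glb_lt; lra).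
  destruct (eventually_uniform (in_dom x0)
              (fun j k => log2 (Cc j k) / INR j + (sigma' - S sigma') * (log2 (lam j k) / INR j))
              e (in_dom_nonempty x0) (fun kj Hkj => Hi (sigma' - S sigma') kj Hkj e He))
    as [N HN].
  set (w := fun j k => Rpower 2 (- (INR j * s))
                       * Rpower (1 + Rabs (IZR k - 2 ^ j * x0)) (- (sigma - s))).
  assert (Hw : forall j k, 0 < w j k)
    by (intros; unfold w, Rpower; apply Rmult_lt_0_compat; apply exp_pos).
  (* the prefix includes [j = 0], about which [Hi] says nothing since [x / 0 = 0] *)
  destruct (in_dom_prefix_bounded x0 (fun j k => Rabs (c j k) / w j k) (N + 1)) as [M HM].
  set (K := Rmax 1 (Rmax M (Rpower 2 (S sigma' - s)))).
  assert (HKM : M <= K) by (eapply Rle_trans; [apply Rmax_l | apply Rmax_r]).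
  assert (HKa : Rpower 2 (S sigma' - s) <= K) by (eapply Rle_trans; [apply Rmax_r | apply Rmax_r]).
  exists K. split; [apply (Rlt_le_trans _ 1); [lra | apply Rmax_l] |].
  intros j k Hk. rewrite Rmult_assoc. change (Rabs (c j k) <= K * w j k).
  assert (Hwjk := Hw j k).
  destruct (Nat.lt_ge_cases j (N + 1)) as [Hsmall | Hlarge].
  - replace (Rabs (c j k)) with (Rabs (c j k) / w j k * w j k) by (field; lra).
    apply Rmult_le_compat_r; [lra |].
    apply (Rle_trans _ M); [exact (HM j k Hsmall Hk) | exact HKM].
  - apply (Rle_trans _ (Rpower 2 (S sigma' - s) * w j k)).
    + apply (coefficient_tail_bound j k sigma s sigma'); auto; [lia |].
      apply HN; [lia | exact Hk].
    + apply Rmult_le_compat_r; lra.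
Qed.

End LowerBound.

Lemma INR_unbounded M : exists N : nat, M < INR N.
Proof.
  destruct (archimed M) as [HM _].
  exists (Z.to_nat (up M)). destruct (Z_le_gt_dec 0 (up M)) as [Hpos | Hneg].
  - rewrite INR_IZR_INZ, Z2Nat.id by exact Hpos. exact HM.
  - replace (Z.to_nat (up M)) with O by lia.
    assert (IZR (up M) < 0) by (apply IZR_lt; lia). simpl. lra.
Qed.

Lemma cv_infty_INR_subsequence (phi : nat -> nat) :
  (forall n, (phi n < phi (S n))%nat) -> cv_infty (fun n => INR (phi n)).
Proof.
  intros Hphi M. destruct (INR_unbounded M) as [N HN].
  exists N. intros n Hn.
  apply (Rlt_le_trans _ _ _ HN), le_INR.
  pose proof (strict_increasing_ge_id phi Hphi n). lia.
Qed.

Lemma mul_lt_of_abs_le_div a b e : 0 < e -> Rabs b <= e / (Rabs a + 1) -> a * b < e.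
Proof.
  intros He Hb. pose proof (Rabs_pos a) as Ha.
  apply (Rle_lt_trans _ (Rabs a * Rabs b)); [rewrite <- Rabs_mult; apply Rle_abs |].
  apply (Rle_lt_trans _ (Rabs a * (e / (Rabs a + 1)))); [apply Rmult_le_compat_l; lra |].
  apply (Rmult_lt_reg_r (Rabs a + 1)); [lra |].
  replace (Rabs a * (e / (Rabs a + 1)) * (Rabs a + 1)) with (Rabs a * e) by (field; lra).
  nra.
Qed.

Section UpperBound.
Variables (x0 : R) (S S1 S2 : R -> R) (mof : nat -> nat) (r : nat -> R)
  (Cc lam c : nat -> Z -> R).
Hypotheses (HS1 : forall x, derivable_pt_lim S x (S1 x))
  (HS2 : forall x, derivable_pt_lim S1 x (S2 x))
  (Hdecr : decreasing S) (Hconc : forall x, S2 x < 0)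
  (Hmof : infinite_partition mof)
  (Hr_in : forall m, exists sigma, r m = S1 sigma / (S1 sigma - 1))
  (Hr_dense : forall sigma eps, 0 < eps ->
      exists m, Rabs (r m - S1 sigma / (S1 sigma - 1)) < eps)
  (HCpos : forall j k, in_dom x0 j k -> 0 < Cc j k)
  (Hlampos : forall j k, in_dom x0 j k -> 0 < lam j k)
  (Hii : forall (phi : nat -> nat) (kn : nat -> Z),
      (forall n, (phi n < phi (Datatypes.S n))%nat) ->
      (forall n, in_dom x0 (phi n) (kn n) /\ in_I mof r x0 (phi n) (kn n)) ->
      Un_cv (fun n => log2 (Cc (phi n) (kn n)) / INR (phi n)) 0 /\
      Un_cv (fun n => log2 (lam (phi n) (kn n)) / INR (phi n)) 0)
  (HcI : forall j k, in_dom x0 j k -> in_I mof r x0 j k ->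
      exists l, is_infimum (bound_fun S x0 j k (lam j k)) l /\
        Rabs (c j k) = Cc j k * l).

Lemma equality_point_exponent j k K sigma s g :
  (1 <= j)%nat -> in_dom x0 j k -> 0 < K ->
  (exists l, is_infimum (bound_fun S x0 j k (lam j k)) l /\ Rabs (c j k) = Cc j k * l) ->
  Rabs (c j k) <= K * Rpower 2 (- (INR j * s))
                  * Rpower (1 + Rabs (IZR k - 2 ^ j * x0)) (- (sigma - s)) ->
  (forall sigma', g <= bound_exponent S sigma'
       ((log2 (1 + Rabs (IZR k - 2 ^ j * x0)) - log2 (lam j k)) / INR j)) ->
  log2 (Cc j k) / INR j + g
    <= log2 K / INR j - s + (s - sigma) * (log2 (1 + Rabs (IZR k - 2 ^ j * x0)) / INR j).
Proof.
  intros Hj Hk HK [l [[_ Hinf] Hcl]] Hbd Hg.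
  assert (HCk := HCpos j k Hk). assert (Hlk := Hlampos j k Hk).
  assert (Hd := one_plus_Rabs_pos (IZR k - 2 ^ j * x0)).
  set (J := INR j) in *. set (L := log2 (1 + Rabs (IZR k - 2 ^ j * x0))) in *.
  assert (HJ : 0 < J) by (apply lt_0_INR; lia).
  assert (Hl : Rpower 2 (J * g) <= l).
  { apply Hinf. intros sigma'. rewrite bound_fun_Rpower2 by exact Hlk.
    apply Rle_Rpower; [lra |]. fold J L.
    replace (- (J * S sigma') + (S sigma' - sigma') * (L - log2 (lam j k)))
      with (J * bound_exponent S sigma' ((L - log2 (lam j k)) / J))
      by (unfold bound_exponent; field; lra).
    apply Rmult_le_compat_l; [lra | apply Hg]. }
  assert (Hchain : Cc j k * Rpower 2 (J * g)
                   <= K * Rpower 2 (- (J * s))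
                      * Rpower (1 + Rabs (IZR k - 2 ^ j * x0)) (- (sigma - s))).
  { rewrite Hcl in Hbd. eapply Rle_trans; [| exact Hbd].
    apply Rmult_le_compat_l; lra. }
  rewrite <- (Rpower2_log2 (Cc j k)) in Hchain by exact HCk.
  rewrite <- (Rpower2_log2 K) in Hchain by exact HK.
  rewrite (Rpower_as_Rpower2 (1 + _)) in Hchain by exact Hd.
  rewrite <- !Rpower_plus in Hchain. apply Rpower2_le_inv in Hchain. fold L in Hchain.
  apply (Rmult_le_reg_r J); [exact HJ |].
  replace ((log2 (Cc j k) / J + g) * J) with (log2 (Cc j k) + J * g) by (field; lra).
  replace ((log2 K / J - s + (s - sigma) * (L / J)) * J)
    with (log2 K + - (J * s) + - (sigma - s) * L) by (field; lra).
  exact Hchain.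
Qed.

Lemma I_points_subsequence m : 0 <= r m < 1 ->
  exists (phi : nat -> nat) (kn : nat -> Z),
    (forall n, (phi n < phi (Datatypes.S n))%nat) /\
    (forall n, (1 <= phi n)%nat /\ mof (phi n) = m
               /\ in_dom x0 (phi n) (kn n) /\ in_I mof r x0 (phi n) (kn n)).
Proof.
  intros Hrm.
  destruct (increasing_subsequence (fun j => (1 <= j)%nat /\ mof j = m)) as [phi [Hphi HP]].
  { intros N. destruct (Hmof m (N + 1)%nat) as [j [Hj Hm]].
    exists j. split; [lia | split; [lia | exact Hm]]. }
  assert (Hk : forall n, exists k, in_dom x0 (phi n) k /\ in_I mof r x0 (phi n) k).
  { intros n. destruct (HP n) as [Hj Hm]. unfold in_I. rewrite Hm.
    apply dyadic_point_at_distance. split; [left; apply exp_pos |].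
    rewrite <- Rpower_pow by lra. apply Rpower_lt; [lra |].
    assert (1 <= INR (phi n)) by (rewrite <- INR_1; apply le_INR; exact Hj).
    nra. }
  destruct (functional_choice _ Hk) as [kn Hkn].
  exists phi, kn. split; [exact Hphi |].
  intros n. destruct (HP n) as [Hj Hm]. destruct (Hkn n) as [Hdom HI]. auto.
Qed.

Lemma I_points_log2_dist_limit m phi kn : 0 <= r m ->
  (forall n, (phi n < phi (Datatypes.S n))%nat) ->
  (forall n, (1 <= phi n)%nat /\ mof (phi n) = m /\ in_I mof r x0 (phi n) (kn n)) ->
  Un_cv (fun n => log2 (1 + Rabs (IZR (kn n) - 2 ^ phi n * x0)) / INR (phi n)) (r m).
Proof.
  intros Hrm Hphi Hpts.
  apply (Un_cv_of_dist_le _ (fun n => log2 3 * / INR (phi n))).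
  - intros n. destruct (Hpts n) as (Hj & Hm & HI). unfold in_I in HI. rewrite Hm in HI.
    assert (HJ : 1 <= INR (phi n)) by (rewrite <- INR_1; apply le_INR; exact Hj).
    destruct (log2_near_of_same_Int_part _ (INR (phi n) * r m) ltac:(nra) HI) as [Hlo Hhi].
    apply Rabs_le. split.
    + assert (0 <= log2 3 * / INR (phi n)).
      { apply Rmult_le_pos; [left; apply log2_pos; lra | left; apply Rinv_0_lt_compat; lra]. }
      assert (r m <= log2 (1 + Rabs (IZR (kn n) - 2 ^ phi n * x0)) / INR (phi n)).
      { apply (Rmult_le_reg_r (INR (phi n))); [lra |].
        unfold Rdiv; rewrite Rmult_assoc, Rinv_l, Rmult_1_r; lra. }
      lra.
    + apply (Rmult_le_reg_r (INR (phi n))); [lra |].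
      unfold Rdiv; rewrite Rmult_minus_distr_r, !Rmult_assoc, Rinv_l, !Rmult_1_r; lra.
  - rewrite <- (Rmult_0_r (log2 3)).
    apply CV_mult; [apply Un_cv_const | apply cv_infty_cv_0, cv_infty_INR_subsequence, Hphi].
Qed.

Lemma exponent_le_along_I_points sigma s K g dl m :
  0 < K -> 0 < dl -> 0 <= r m < 1 ->
  (forall j k, in_dom x0 j k ->
     Rabs (c j k) <= K * Rpower 2 (- (INR j * s))
                     * Rpower (1 + Rabs (IZR k - 2 ^ j * x0)) (- (sigma - s))) ->
  (forall u, Rabs (u - r m) < dl -> forall sigma', g <= bound_exponent S sigma' u) ->
  g <= - s + (s - sigma) * r m.
Proof.
  intros HK Hdl Hrm Hbd Hnear.
  destruct (I_points_subsequence m Hrm) as [phi [kn [Hphi Hpts]]].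
  destruct (Hii phi kn Hphi) as [HCn Hlamn].
  { intros n. destruct (Hpts n) as (_ & _ & Hdom & HI). auto. }
  assert (Hu0 := I_points_log2_dist_limit m phi kn (proj1 Hrm) Hphi
                   ltac:(intros n; destruct (Hpts n) as (? & ? & _ & ?); auto)).
  set (u0 := fun n => log2 (1 + Rabs (IZR (kn n) - 2 ^ phi n * x0)) / INR (phi n)) in Hu0.
  destruct (CV_minus _ _ _ _ Hu0 Hlamn dl Hdl) as [N HN].
  assert (Hineq : forall n, (N <= n)%nat ->
            log2 (Cc (phi n) (kn n)) / INR (phi n) + g
            <= log2 K * / INR (phi n) + (- s + (s - sigma) * u0 n)).
  { intros n Hn. destruct (Hpts n) as (Hj & _ & Hdom & HI).
    specialize (HN n Hn). unfold Rdist in HN.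
    assert (Hclose : Rabs ((log2 (1 + Rabs (IZR (kn n) - 2 ^ phi n * x0))
                            - log2 (lam (phi n) (kn n))) / INR (phi n) - r m) < dl).
    { unfold u0 in HN. unfold Rdiv in *. rewrite Rminus_0_r in HN.
      rewrite Rmult_minus_distr_r. exact HN. }
    pose proof (equality_point_exponent (phi n) (kn n) K sigma s g Hj Hdom HK
                  (HcI _ _ Hdom HI) (Hbd _ _ Hdom) (Hnear _ Hclose)).
    unfold u0, Rdiv in *. lra. }
  assert (Hlim := Un_cv_le_eventually _ _ _ _ N Hineq
                    (CV_plus _ _ _ _ HCn (Un_cv_const g))
                    (CV_plus _ _ _ _
                       (CV_mult _ _ _ _ (Un_cv_const (log2 K))
                          (cv_infty_cv_0 _ (cv_infty_INR_subsequence phi Hphi)))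
                       (CV_plus _ _ _ _ (Un_cv_const (- s))
                          (CV_mult _ _ _ _ (Un_cv_const (s - sigma)) Hu0)))).
  lra.
Qed.

Lemma frontier_upper sigma s : in_C2ml c x0 s (sigma - s) -> s <= S sigma.
Proof.
  intros [K [HK Hbd]]. apply Rnot_lt_le. intros Hlt.
  set (rh := tangency_point S1 sigma).
  destruct (tangency_point_bounds S S1 HS1 Hdecr sigma) as [Hrh0 Hrh1]. fold rh in Hrh0, Hrh1.
  set (mu := (s - S sigma) * (1 - rh)).
  assert (Hmu : 0 < mu) by (unfold mu; nra).
  destruct (bound_exponent_lower_near_tangency S S1 S2 HS1 HS2 Hdecr Hconc sigma (mu / 2))
    as [dl [Hdl Hnear]]; [lra |]. fold rh in Hnear.
  set (d := Rmin (dl / 2) (mu / 2 / (Rabs (s - sigma) + 1))).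
  assert (Hd : 0 < d).
  { apply Rmin_glb_lt; [lra |]. pose proof (Rabs_pos (s - sigma)). apply Rdiv_lt_0_compat; lra. }
  destruct (Hr_dense sigma d Hd) as [m Hm]. fold (tangency_point S1 sigma) rh in Hm.
  assert (Hrm : 0 <= r m < 1).
  { destruct (Hr_in m) as [sm ->]. exact (tangency_point_bounds S S1 HS1 Hdecr sm). }
  assert (Hexp : bound_exponent S sigma rh - mu / 2 <= - s + (s - sigma) * r m).
  { apply (exponent_le_along_I_points sigma s K _ (dl / 2) m HK ltac:(lra) Hrm Hbd).
    intros u Hu. apply Hnear.
    replace (u - rh) with ((u - r m) + (r m - rh)) by ring.
    assert (d <= dl / 2) by apply Rmin_l.
    eapply Rle_lt_trans; [apply Rabs_triang | lra]. }
  assert (Hsmall : (s - sigma) * (r m - rh) < mu / 2).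
  { apply mul_lt_of_abs_le_div; [lra |].
    apply (Rle_trans _ d); [lra | apply Rmin_r]. }
  unfold bound_exponent, mu in Hexp, Hsmall. lra.
Qed.

End UpperBound.

Theorem theorem2p1
  (x0 : R) (S S1 S2 : R -> R)
  (HS1 : forall sigma, derivable_pt_lim S sigma (S1 sigma))
  (HS2 : forall sigma, derivable_pt_lim S1 sigma (S2 sigma))
  (Hdecr : forall a b, a <= b -> S b <= S a)
  (Hconc : forall sigma, S2 sigma < 0)
  (mof : nat -> nat) (Hmof : infinite_partition mof)
  (r : nat -> R)
  (Hr_in : forall m, exists sigma, r m = S1 sigma / (S1 sigma - 1))
  (Hr_dense : forall sigma eps, 0 < eps ->
      exists m, Rabs (r m - S1 sigma / (S1 sigma - 1)) < eps)
  (Cc lam c : nat -> Z -> R)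
  (HCpos : forall j k, in_dom x0 j k -> 0 < Cc j k)
  (Hlampos : forall j k, in_dom x0 j k -> 0 < lam j k)
  (Hi : forall (C : R) (kj : nat -> Z), (forall j, in_dom x0 j (kj j)) ->
      forall eps, 0 < eps -> exists N : nat, forall j : nat, (N <= j)%nat ->
        log2 (Cc j (kj j)) / INR j + C * (log2 (lam j (kj j)) / INR j) <= eps)
  (Hii : forall (phi : nat -> nat) (kn : nat -> Z),
      (forall n, (phi n < phi (Datatypes.S n))%nat) ->
      (forall n, in_dom x0 (phi n) (kn n) /\ in_I mof r x0 (phi n) (kn n)) ->
      Un_cv (fun n => log2 (Cc (phi n) (kn n)) / INR (phi n)) 0 /\
      Un_cv (fun n => log2 (lam (phi n) (kn n)) / INR (phi n)) 0)
  (Hc : forall j k, in_dom x0 j k ->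
      exists l, is_infimum (bound_fun S x0 j k (lam j k)) l /\
        Rabs (c j k) <= Cc j k * l)
  (HcI : forall j k, in_dom x0 j k -> in_I mof r x0 j k ->
      exists l, is_infimum (bound_fun S x0 j k (lam j k)) l /\
        Rabs (c j k) = Cc j k * l) :
  frontier_is c x0 S.
Proof.
  intros sigma. split.
  - intros s Hs.
    exact (frontier_upper x0 S S1 S2 mof r Cc lam c HS1 HS2 Hdecr Hconc Hmof Hr_in Hr_dense
             HCpos Hlampos Hii HcI sigma s Hs).
  - intros b Hb. apply Rnot_lt_le. intros Hlt.
    assert (Hin : in_C2ml c x0 ((b + S sigma) / 2) (sigma - (b + S sigma) / 2))
      by (apply (frontier_lower x0 S S1 Cc lam c HS1 HCpos Hlampos Hi Hc); lra).
    specialize (Hb _ Hin). lra.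
Qed.
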